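(* Let $G$ be an edge-coloured multigraph, $M$ a rainbow matching of maximum size in $G$, $C_0$ the set of colours not used on $M$, $t$ a positive integer, $N$ a $t$-auxiliary matching for $M$, and $M' \subseteq M$ with $|M'| < t/2 - 1$. Then there is no $(C_0 \cup C_N)$-coloured rainbow matching of size $|M'|+1$ which is vertex-disjoint from the matching $\{v_e x_e : e \in M_N \setminus M'\} \cup (M \setminus (M_N \cup M'))$.
   Context: A rainbow matching is a matching whose edges have pairwise distinct colours; an edge is $C$-coloured if its colour lies in $C$. Let $V$ be the vertex set of $G$. For a rainbow matching $M$ with unused colour set $C_0$, a $t$-auxiliary matching for $M$ is a matching $N$ each of whose edges has one endpoint in $V\setminus V(M)$ and the other in $V(M)$, such that for each edge of $N$ its pair of endpoints is joined by edges of at least $t$ distinct colours from $C_0$, and no two edges of $N$ intersect the same edge of $M$. $M_N \subseteq M$ is the set of edges of $M$ intersecting an edge of $N$; for $e \in M_N$, $x_e$ is the endpoint of $e$ lying in $V(N)$, $m(x_e)$ the other endpoint of $e$, and $v_e$ the vertex matched to $x_e$ in $N$. $C_N$ is the set of colours of the edges of $M_N$. *)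

From mathcomp Require Import all_boot.
Set Implicit Arguments. Unset Strict Implicit. Unset Printing Implicit Defensive.

(* An edge-coloured multigraph is given by finite types V (vertices),
   E (edges, allowing parallel edges) and C (colours), an endpoint map
   [ends : E -> V * V] and a colouring [col : E -> C]. *)
Section Rainbow.
Variables (V E C : finType) (ends : E -> V * V) (col : E -> C).

Definition vx (e : E) : {set V} := [set (ends e).1; (ends e).2].

Definition VM (M : {set E}) : {set V} := \bigcup_(e in M) vx e.

Definition is_matching (M : {set E}) : Prop :=
  forall e f, e \in M -> f \in M -> e != f -> [disjoint vx e & vx f].

Definition rainbow (M : {set E}) : Prop := {in M &, injective col}.

Definition rainbow_matching (M : {set E}) : Prop := is_matching M /\ rainbow M.

Definition coloured_in (M : {set E}) (S : {set C}) : Prop :=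
  forall e, e \in M -> col e \in S.

Definition unused (M : {set E}) : {set C} := ~: (col @: M).

Definition joined_colours (a b : V) : {set C} :=
  [set col e | e in [set e0 : E | vx e0 == [set a; b]]].

(* A t-auxiliary matching N for M, represented as a set of ordered pairs
   (v, x) with v outside V(M) and x in V(M) (so v = v_e, x = x_e). *)
Definition aux_matching (t : nat) (M : {set E}) (N : {set V * V}) : Prop :=
  [/\ forall p, p \in N -> p.1 \notin VM M /\ p.2 \in VM M,
      forall p, p \in N -> t <= #|joined_colours p.1 p.2 :&: unused M|,
      forall p q, p \in N -> q \in N -> p != q ->
        [disjoint [set p.1; p.2] & [set q.1; q.2]] &
      forall p q e, p \in N -> q \in N -> e \in M -> p != q ->
        ~ (p.2 \in vx e /\ q.2 \in vx e)].

Definition M_N (M : {set E}) (N : {set V * V}) : {set E} :=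
  [set e in M | [exists p in N, p.2 \in vx e]].

Definition C_N (M : {set E}) (N : {set V * V}) : {set C} := col @: M_N M N.

(* vertex set of {v_e x_e : e in M_N \ M'} ∪ (M \ (M_N ∪ M')) *)
Definition avoid_set (M M' : {set E}) (N : {set V * V}) : {set V} :=
  (\bigcup_(p in N | [exists e in M_N M N :\: M', p.2 \in vx e]) [set p.1; p.2])
  :|: VM (M :\: (M_N M N :|: M')).

End Rainbow.

From mathcomp Require Import all_boot zify.
Set Implicit Arguments. Unset Strict Implicit. Unset Printing Implicit Defensive.

(* Suppose R were such a matching.  For R0 ⊆ R and D ⊆ M with |D| < |R0|, let T
   be the edges of M \ D that clash with R0 (share a vertex or a colour).  If
   T ⊆ M_N \ M', the pairs v_e x_e with e ∈ T avoid V(R0), and if moreover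
   |T| + |col(R0) ∩ C_0| ≤ t, each of them still has |T| colours of C_0 not used
   by R0, so they can be given distinct such colours; then
   R0 ∪ (M \ (D ∪ T)) ∪ {v_e x_e : e ∈ T} is a rainbow matching larger than M.
   Hence t < |T| + |col(R0) ∩ C_0|, and the right-hand side is at most the number
   of vertices and colours of R0 not found on D.  If every edge of R meets M' in
   a vertex or a colour, R0 = R, D = M' bound this by 2|R| = 2|M'| + 2 < t;
   otherwise an edge r of R meeting M' in neither way gives R0 = {r}, D = ∅ and
   t < 3, although t > 2|M'| + 2. *)

Lemma disjointP (T : finType) (A B : {set T}) :
  reflect (forall x, x \in A -> x \notin B) [disjoint A & B].
Proof.
by rewrite disjoint_subset; apply: (iffP subsetP) => AB x /AB; rewrite inE.
Qed.

Lemma cardsU_disjoint (T : finType) (A B : {set T}) :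
  [disjoint A & B] -> #|A :|: B| = #|A| + #|B|.
Proof. by move=> dAB; apply/eqP; rewrite (leq_card_setU A B).2. Qed.

Lemma leq_card_bigcup (I T : finType) (A : {set I}) (F : I -> {set T}) :
  #|\bigcup_(i in A) F i| <= \sum_(i in A) #|F i|.
Proof.
elim/big_rec2: _ => [|i n U _ leUn]; first by rewrite cards0.
by apply: leq_trans (leq_card_setU _ _) _; rewrite leq_add2l.
Qed.

Lemma large_sets_sdr (I T : finType) (t0 : T) (S : {set I}) (A : I -> {set T}) :
  {in S, forall i, #|S| <= #|A i|} ->
  exists2 f : I -> T, {in S &, injective f} & {in S, forall i, f i \in A i}.
Proof.
elim: {S}_.+1 {-2}S (ltnSn #|S|) => // n IHn S.
have [-> _ _ | [i0 i0S] leSn largeA] := set_0Vmem S.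
  by exists (fun=> t0) => [x y|x]; rewrite inE.
set S' := S :\ i0.
have cardS : #|S| = #|S'|.+1 by rewrite (cardsD1 i0 S) i0S.
have [f f_inj fA] : exists2 f : I -> T,
    {in S' &, injective f} & {in S', forall i, f i \in A i}.
  apply: IHn => [|i /setD1P[_ iS]]; first by rewrite -ltnS -cardS.
  by apply: leq_trans (largeA i iS); rewrite cardS.
have [c /setDP[cA cf]] : exists c, c \in A i0 :\: f @: S'.
  apply/set0Pn; rewrite setD_eq0; apply: contraTN (largeA i0 i0S).
  move/subset_leq_card/leq_trans/(_ (leq_imset_card f S')).
  by rewrite cardS -ltnNge.
exists (fun i => if i == i0 then c else f i) => [x y xS yS|i iS].
  have S'P z : z \in S -> z != i0 -> z \in S' by move=> zS zi; rewrite !inE zi.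
  case: eqP => [-> | /eqP xi]; case: eqP => [-> | /eqP yi] //.
  - by move=> cfy; case/imsetP: cf; exists y; rewrite ?S'P.
  - by move=> fxc; case/imsetP: cf; exists x; rewrite ?S'P.
  - by apply: f_inj; rewrite S'P.
by case: eqP => [-> // | /eqP ii0]; apply: fA; rewrite !inE ii0.
Qed.

Section RainbowMatchings.
Variables (V E C : finType) (ends : E -> V * V) (col : E -> C).
Local Notation vx := (vx ends).
Local Notation VM := (VM ends).
Local Notation rainbow_matching := (rainbow_matching ends col).

Definition compatible (e f : E) : bool := [disjoint vx e & vx f] && (col e != col f).

Lemma compatibleC e f : compatible e f = compatible f e.
Proof. by rewrite /compatible disjoint_sym eq_sym. Qed.

Lemma compatiblexx e : compatible e e = false.
Proof. by rewrite /compatible eqxx andbF. Qed.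

Lemma rainbow_matchingP (Q : {set E}) :
  rainbow_matching Q <-> {in Q &, forall e f, e != f -> compatible e f}.
Proof.
split=> [[mQ rQ] e f eQ fQ ef | cQ].
  by rewrite /compatible mQ //=; apply: contra ef => /eqP/(rQ _ _ eQ fQ)/eqP.
split=> [e f eQ fQ /(cQ e f eQ fQ)/andP[] // | e f eQ fQ cef].
by apply/eqP; apply: contraT => /(cQ e f eQ fQ)/andP[_]; rewrite cef eqxx.
Qed.

Lemma rainbow_matchingS (Q Q' : {set E}) :
  Q' \subset Q -> rainbow_matching Q -> rainbow_matching Q'.
Proof.
move=> sQ /rainbow_matchingP cQ; apply/rainbow_matchingP.
by move=> e f /(subsetP sQ) eQ /(subsetP sQ); apply: cQ.
Qed.

Lemma matching_edge_eq (M : {set E}) v e f :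
  is_matching ends M -> e \in M -> f \in M -> v \in vx e -> v \in vx f -> e = f.
Proof.
move=> mM eM fM ve vf; apply/eqP; apply: contraT => ef.
by rewrite (disjointFr (mM e f eM fM ef) ve) in vf.
Qed.

Definition meets (D : {set E}) (r : E) : bool :=
  ~~ [disjoint vx r & VM D] || (col r \in col @: D).

Lemma card_fresh_edge_le (D : {set E}) r :
  #|vx r :\: VM D| + #|[set col r] :\: col @: D| + meets D r <= 3.
Proof.
have new_vx : #|vx r :\: VM D| + ~~ [disjoint vx r & VM D] <= 2.
  have vx_le2 : #|vx r| <= 2 by rewrite cards2; case: (_ != _).
  case: (boolP [disjoint _ & _]) => [_ | ].
    by rewrite addn0; apply: leq_trans (subset_leq_card (subsetDl _ _)) vx_le2.
  rewrite -setI_eq0 => /set0Pn[v /setIP[vr vD]].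
  rewrite (cardsD1 v) vr add1n ltnS in vx_le2.
  rewrite addn1 ltnS; apply: leq_trans _ vx_le2; apply: subset_leq_card.
  apply/subsetP => w; rewrite !inE => /andP[wD ->]; rewrite andbT.
  by apply: contraNneq wD => ->.
have new_col : #|[set col r] :\: col @: D| + (col r \in col @: D) <= 1.
  case: (boolP (col r \in col @: D)) => [cD | _].
    have /eqP -> : [set col r] :\: col @: D == set0 by rewrite setD_eq0 sub1set.
    by rewrite cards0.
  by rewrite addn0 -(cards1 (col r)) subset_leq_card ?subsetDl.
move: new_vx new_col; rewrite /meets.
by case: [disjoint _ & _]; case: (_ \in _) => /=; lia.
Qed.

Lemma leq_card_fresh_sum (D R0 : {set E}) :
  #|VM R0 :\: VM D| + #|col @: R0 :\: col @: D|
  <= \sum_(r in R0) (#|vx r :\: VM D| + #|[set col r] :\: col @: D|).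
Proof.
rewrite big_split /=; apply: leq_add; apply: leq_trans (leq_card_bigcup _ _);
  apply: subset_leq_card; apply/subsetP.
  move=> v /setDP[/bigcupP[r rR vr] vD]; apply/bigcupP; exists r => //.
  by rewrite inE vD vr.
move=> _ /setDP[/imsetP[r rR ->] cD]; apply/bigcupP; exists r => //.
by rewrite !inE cD eqxx.
Qed.

Lemma card_fresh_le (D R0 : {set E}) :
  #|VM R0 :\: VM D| + #|col @: R0 :\: col @: D| + #|[set r in R0 | meets D r]|
  <= #|R0| * 3.
Proof.
have -> : #|[set r in R0 | meets D r]| = \sum_(r in R0) meets D r.
  rewrite -sum1_card big_mkcond [RHS]big_mkcond /=.
  by apply: eq_bigr => r _; rewrite inE; case: (r \in R0); case: (meets D r).
rewrite -sum_nat_const; apply: leq_trans (leq_add (leq_card_fresh_sum D R0) (leqnn _)) _.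
by rewrite -big_split /=; apply: leq_sum => r _; apply: card_fresh_edge_le.
Qed.

Section Augmentation.
Variables (M : {set E}) (t : nat) (N : {set V * V}).
Hypothesis rmM : rainbow_matching M.
Hypothesis auxN : aux_matching ends col t M N.

Definition conflicts (D R0 : {set E}) : {set E} :=
  [set e in M :\: D | [exists r in R0, ~~ compatible e r]].

Definition aux_touching (T : {set E}) : {set V * V} :=
  [set p in N | [exists e in T, p.2 \in vx e]].

Lemma card_aux_touching (T : {set E}) : T \subset M_N ends M N -> #|aux_touching T| = #|T|.
Proof.
move=> sTMN; have [_ _ _ auxN4] := auxN.
have TM e : e \in T -> e \in M by move/(subsetP sTMN); rewrite inE => /andP[].
pose h (p : V * V) := [pick e in T | p.2 \in vx e].
have hT p e : h p = Some e -> e \in T /\ p.2 \in vx e.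
  by rewrite /h; case: pickP => // e' /andP[e'T pe'] [<-].
have hP p : p \in aux_touching T -> exists e, h p = Some e.
  rewrite inE => /andP[_ /existsP[e /andP[eT pe]]].
  by rewrite /h; case: pickP => [e' _ | /(_ e)]; [exists e' | rewrite eT pe].
have h_inj : {in aux_touching T &, injective h}.
  move=> p q pP qP hpq; have [e hpe] := hP p pP.
  have [eT pe] := hT p e hpe; rewrite hpq in hpe; have [_ qe] := hT q e hpe.
  apply/eqP; apply: contraT => pq; move: pP qP; rewrite !inE.
  by case/andP=> pN _ /andP[qN _]; case: (auxN4 p q e pN qN (TM e eT) pq).
rewrite -(card_in_imset h_inj) -(card_imset T (@Some_inj _)).
apply: eq_card => o; apply/imsetP/imsetP => [[p pP ->] | [e eT ->]].
  by have [e he] := hP p pP; exists e; [exact: (hT p e he).1 | ].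
have := subsetP sTMN e eT; rewrite inE => /andP[eM /existsP[p /andP[pN pe]]].
have pP : p \in aux_touching T.
  by rewrite inE pN; apply/existsP; exists e; rewrite eT.
have [e' he'] := hP p pP; have [e'T pe'] := hT p e' he'.
by exists p; rewrite // he' (matching_edge_eq rmM.1 (TM e' e'T) eM pe' pe).
Qed.

Lemma aux_recolouring (e0 : E) (P : {set V * V}) (X : {set C}) :
  P \subset N -> #|P| + #|X :&: unused col M| <= t ->
  exists g : V * V -> E,
    [/\ {in P, forall p, vx (g p) = [set p.1; p.2]},
        {in P, forall p, col (g p) \in unused col M :\: X} &
        {in P &, injective (col \o g)}].
Proof.
move=> sPN small; have [_ auxN2 _ _] := auxN.
pose A p := joined_colours ends col p.1 p.2 :&: unused col M :\: X.
have [f f_inj fA] : exists2 f : V * V -> C,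
    {in P &, injective f} & {in P, forall p, f p \in A p}.
  apply: (large_sets_sdr (col e0)) => p pP; rewrite /A cardsD.
  have JUX : #|joined_colours ends col p.1 p.2 :&: unused col M :&: X|
         <= #|X :&: unused col M|.
    by apply: subset_leq_card; apply/subsetP => c; rewrite !inE => /andP[/andP[_ ->] ->].
  apply: leq_trans (leq_sub2l _ JUX).
  have large := leq_trans small (auxN2 p (subsetP sPN p pP)).
  by rewrite leq_subRL 1?addnC // (leq_trans (leq_addl _ _) large).
pose g p := odflt e0 [pick n | (vx n == [set p.1; p.2]) && (col n == f p)].
have gP p : p \in P -> vx (g p) = [set p.1; p.2] /\ col (g p) = f p.
  move=> /fA /setDP[/setIP[/imsetP[n + fn] _] _]; rewrite inE => vn.
  rewrite /g; case: pickP => [n' /andP[/eqP ? /eqP ?] | /(_ n)] //.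
  by rewrite vn fn eqxx.
exists g; split=> [p /gP[] // | p pP | p q pP qP /=].
  by have [_ ->] := gP p pP; have /setDP[/setIP[_ ?] ?] := fA p pP; apply/setDP.
by have [_ ->] := gP p pP; have [_ ->] := gP q qP; apply: f_inj.
Qed.

Lemma card_meeting_le (D R0 : {set E}) : D \subset M ->
  #|[set e in M :\: D | ~~ [disjoint vx e & VM R0]]| <= #|VM R0 :\: VM D|.
Proof.
move=> sDM; set Tv := [set e in _ | _].
have TvM e : e \in Tv -> e \in M :\: D by rewrite inE => /andP[].
pose phi e := [pick v in vx e :&: VM R0].
have phiP e : e \in Tv -> exists2 v, phi e = Some v & v \in vx e :&: VM R0.
  rewrite inE => /andP[_]; rewrite -setI_eq0 => /set0Pn[v vI].
  by rewrite /phi; case: pickP => [w wI | /(_ v)]; [exists w | rewrite vI].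
have phi_inj : {in Tv &, injective phi}.
  move=> e f eT fT; have [v -> /setIP[ve _]] := phiP e eT.
  have [w -> /setIP[wf _]] := phiP f fT; case=> vw; rewrite -vw in wf.
  have /setDP[eM _] := TvM e eT; have /setDP[fM _] := TvM f fT.
  exact: matching_edge_eq rmM.1 eM fM ve wf.
rewrite -(card_in_imset phi_inj) -(card_imset (VM R0 :\: VM D) (@Some_inj _)).
apply: subset_leq_card; apply/subsetP => _ /imsetP[e eT ->].
have [v -> /setIP[ve vR]] := phiP e eT; apply: imset_f; rewrite inE vR andbT.
apply/bigcupP => -[d dD vd]; have /setDP[eM eD] := TvM e eT.
by rewrite (matching_edge_eq rmM.1 eM (subsetP sDM d dD) ve vd) dD in eD.
Qed.

Lemma card_colour_clash_le (D R0 : {set E}) : D \subset M ->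
  #|[set e in M :\: D | col e \in col @: R0]| + #|col @: R0 :&: unused col M|
  <= #|col @: R0 :\: col @: D|.
Proof.
move=> sDM; set Tc := [set e in _ | _].
have TcM e : e \in Tc -> e \in M by rewrite !inE => /andP[/andP[]].
have col_inj : {in Tc &, injective col}.
  by move=> e f /TcM eM /TcM fM; apply: rmM.2.
rewrite -(card_in_imset col_inj) -cardsU_disjoint; last first.
  apply/disjointP => _ /imsetP[e /TcM eM ->]; rewrite !inE negb_and negbK.
  by rewrite (imset_f col eM) orbT.
apply: subset_leq_card; apply/subsetP => c; rewrite !inE => /orP[/imsetP[e] | ].
  rewrite !inE => /andP[/andP[eD eM] ecR] ->; rewrite ecR andbT.
  apply/imsetP => -[d dD /(rmM.2 e d eM (subsetP sDM d dD)) ed].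
  by rewrite ed dD in eD.
case/andP=> -> cM; rewrite andbT; apply: contra cM => /imsetP[d dD ->].
exact/imset_f/(subsetP sDM).
Qed.

Lemma card_conflicts_le (D R0 : {set E}) : D \subset M ->
  #|conflicts D R0| + #|col @: R0 :&: unused col M|
  <= #|VM R0 :\: VM D| + #|col @: R0 :\: col @: D|.
Proof.
move=> sDM; set Tv := [set e in M :\: D | ~~ [disjoint vx e & VM R0]].
set Tc := [set e in M :\: D | col e \in col @: R0].
apply: leq_trans (_ : _ <= #|Tv| + (#|Tc| + #|col @: R0 :&: unused col M|)) _.
  rewrite addnA leq_add2r; apply: leq_trans (leq_card_setU _ _).
  apply: subset_leq_card; apply/subsetP => e; rewrite !inE.
  case/andP=> eMD /existsP[r /andP[rR]]; rewrite eMD negb_and negbK /=.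
  case/orP=> [nd | /eqP ->]; last by rewrite imset_f ?orbT.
  by apply/orP; left; apply: contra nd; apply/disjointWr/bigcup_sup.
by rewrite leq_add ?card_meeting_le ?card_colour_clash_le.
Qed.

Section Augmented.
Variables (R0 D : {set E}) (g : V * V -> E).
Hypothesis rmR0 : rainbow_matching R0.
Let T := conflicts D R0.
Let K := M :\: (D :|: T).
Let P := aux_touching T.
Hypothesis P_avoids_R0 : {in P, forall p, [disjoint [set p.1; p.2] & VM R0]}.
Hypothesis g_ends : {in P, forall p, vx (g p) = [set p.1; p.2]}.
Hypothesis g_col : {in P, forall p, col (g p) \in unused col M :\: col @: R0}.
Hypothesis g_inj : {in P &, injective (col \o g)}.

Lemma unconflicted_compatible k r : k \in K -> r \in R0 -> compatible k r.
Proof.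
move=> /setDP[kM]; rewrite in_setU negb_or => /andP[kD kT] rR.
apply: contraNT kT => incompatible; rewrite !inE kD kM /=.
by apply/existsP; exists r; rewrite rR.
Qed.

Lemma aux_edge_compatible_R0 p r : p \in P -> r \in R0 -> compatible (g p) r.
Proof.
move=> pP rR; have /setDP[_ cR] := g_col pP; rewrite /compatible g_ends //.
rewrite (disjointWr (bigcup_sup r rR) (P_avoids_R0 pP)) /=.
by apply: contra cR => /eqP ->; apply: imset_f.
Qed.

Lemma aux_edge_compatible_K p k : p \in P -> k \in K -> compatible (g p) k.
Proof.
have [auxN1 _ _ _] := auxN.
move=> pP /setDP[kM]; rewrite in_setU negb_or => /andP[_ kT].
move: (pP); rewrite inE => /andP[pN /existsP[e /andP[eT pe]]].
rewrite /compatible g_ends //; apply/andP; split; last first.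
  have /setDP[+ _] := g_col pP; rewrite inE; apply: contra => /eqP ->.
  exact: imset_f.
apply/disjointP => v /set2P[->|->].
  by apply: contra (auxN1 p pN).1 => pk; apply/bigcupP; exists k.
have /setDP[eM _] : e \in M :\: D by move: eT; rewrite inE => /andP[].
by apply: contra kT => pk; rewrite -(matching_edge_eq rmM.1 eM kM pe pk).
Qed.

Lemma aux_edges_compatible p q : p \in P -> q \in P -> g p != g q ->
  compatible (g p) (g q).
Proof.
have [_ _ auxN3 _] := auxN.
move=> pP qP gpq; have pq : p != q by apply: contraNneq gpq => ->.
have [pN qN] : p \in N /\ q \in N by move: pP qP; rewrite !inE => /andP[? _] /andP[].
rewrite /compatible !g_ends // auxN3 //=.
by apply: contra pq => /eqP/(g_inj pP qP) ->.
Qed.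

Let Q := R0 :|: K :|: g @: P.

Lemma augmented_rainbow_matching : rainbow_matching Q.
Proof.
have /rainbow_matchingP cR0 := rmR0; have /rainbow_matchingP cM := rmM.
have memQ x : x \in Q -> [\/ x \in R0, x \in K | exists2 p, p \in P & x = g p].
  rewrite !in_setU -orbA => /or3P[|| /imsetP[p pP ->]]; by [constructor 1 |
    constructor 2 | constructor 3; exists p].
apply/rainbow_matchingP => x y /memQ[xR|xK|[p pP ->]] /memQ[yR|yK|[q qP ->]] xy.
- exact: cR0.
- by rewrite compatibleC unconflicted_compatible.
- by rewrite compatibleC aux_edge_compatible_R0.
- exact: unconflicted_compatible.
- by move: xK yK => /setDP[xM _] /setDP[yM _]; apply: cM.
- by rewrite compatibleC aux_edge_compatible_K.
- exact: aux_edge_compatible_R0.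
- exact: aux_edge_compatible_K.
- exact: aux_edges_compatible.
Qed.

Lemma card_augmented : #|Q| = #|R0| + #|K| + #|P|.
Proof.
rewrite !cardsU_disjoint ?card_in_imset //.
- by move=> p q pP qP gpq; apply: g_inj => //=; rewrite gpq.
- apply/disjointP => x xR; apply/negP => xK.
  by have := unconflicted_compatible xK xR; rewrite compatiblexx.
apply/disjointP => x /setUP[xR | xK]; apply/imsetP => -[p pP gpx].
  by have := aux_edge_compatible_R0 pP xR; rewrite gpx compatiblexx.
by have := aux_edge_compatible_K pP xK; rewrite gpx compatiblexx.
Qed.

End Augmented.

Lemma conflicts_exceed (R0 D : {set E}) :
    (forall Q, rainbow_matching Q -> #|Q| <= #|M|) ->
    rainbow_matching R0 -> D \subset M -> #|D| < #|R0| ->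
    conflicts D R0 \subset M_N ends M N ->
    {in aux_touching (conflicts D R0), forall p, [disjoint [set p.1; p.2] & VM R0]} ->
  t < #|conflicts D R0| + #|col @: R0 :&: unused col M|.
Proof.
move=> maxM rmR0 sDM ltDR0 sTMN avoidP; rewrite ltnNge; apply/negP => small.
have [r0 _] : exists r0, r0 \in R0.
  by apply/set0Pn; rewrite -card_gt0 (leq_ltn_trans _ ltDR0).
have sPN : aux_touching (conflicts D R0) \subset N.
  by apply/subsetP => p; rewrite inE => /andP[].
rewrite -(card_aux_touching sTMN) in small.
have [g [g_ends g_col g_inj]] := aux_recolouring r0 sPN small.
have := maxM _ (augmented_rainbow_matching rmR0 avoidP g_ends g_col g_inj).
rewrite card_augmented // (card_aux_touching sTMN).
have := (leq_card_setU D (conflicts D R0)).1.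
have := subset_leq_card (subsetIr M (D :|: conflicts D R0)).
rewrite -(cardsID (D :|: conflicts D R0) M).
lia.
Qed.

Lemma conflicts_disjoint (D R0 : {set E}) : [disjoint conflicts D R0 & D].
Proof. by apply/disjointP => e; rewrite !inE => /andP[/andP[]]. Qed.

Lemma conflicts_disjoint_unmet (D0 D : {set E}) r :
  ~~ meets D r -> [disjoint conflicts D0 [set r] & D].
Proof.
move=> unmet; apply/disjointP => e; rewrite inE => /andP[_ /existsP[r' /andP[]]].
rewrite inE => /eqP -> {r'}; rewrite /compatible negb_and negbK.
move=> incompatible; apply/negP => eD; case/negP: unmet.
case/orP: incompatible => [nd | /eqP ce]; apply/orP; [left | right].
  by apply: contra nd => d; rewrite disjoint_sym (disjointWr (bigcup_sup e eD) d).
by rewrite -ce imset_f.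
Qed.

Section AvoidingMatching.
Variables (M' R : {set E}).
Hypothesis colR : coloured_in col R (unused col M :|: C_N ends col M N).
Hypothesis avoidR : [disjoint VM R & avoid_set ends M M' N].

Lemma compatible_outside e r :
  e \in M :\: (M_N ends M N :|: M') -> r \in R -> compatible e r.
Proof.
move=> eout rR; have /setDP[eM] := eout; rewrite in_setU negb_or => /andP[eMN _].
apply/andP; split.
  apply/disjointP => v ve; apply: contraTN avoidR => vr.
  apply/negP => /disjointP/(_ v); rewrite !inE => /(_ _)/negP; apply.
    by apply/bigcupP; exists r.
  by apply/orP; right; apply/bigcupP; exists e.
apply/eqP => ce; have := colR rR; rewrite -ce !inE imset_f //= => /imsetP[f fMN cf].
have /setIdP[fM _] := fMN.
by rewrite (rmM.2 e f eM fM cf) fMN in eMN.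
Qed.

Lemma conflicts_in_MN (D R0 : {set E}) : R0 \subset R ->
  [disjoint conflicts D R0 & M'] -> conflicts D R0 \subset M_N ends M N :\: M'.
Proof.
move=> sR0R dM'; apply/subsetP => e eT; have eM' := disjointFr dM' eT.
rewrite inE eM' /=; move: eT; rewrite inE => /andP[/setDP[eM _]].
case/existsP=> r /andP[rR]; apply: contraNT => eMN.
by apply: compatible_outside (subsetP sR0R r rR); rewrite in_setD in_setU eM' eM orbF eMN.
Qed.

Lemma aux_touching_avoids (D R0 : {set E}) : R0 \subset R ->
  conflicts D R0 \subset M_N ends M N :\: M' ->
  {in aux_touching (conflicts D R0), forall p, [disjoint [set p.1; p.2] & VM R0]}.
Proof.
move=> sR0R sTMN p pP; apply/disjointP => v vp; apply: contraTN avoidR => vR0.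
have vR : v \in VM R.
  by case/bigcupP: vR0 => r rR vr; apply/bigcupP; exists r => //; apply: (subsetP sR0R).
rewrite -setI_eq0; apply/set0Pn; exists v; apply/setIP; split=> //.
apply/setUP; left; apply/bigcupP; exists p => //.
move: pP; rewrite inE => /andP[-> /existsP[e /andP[eT pe]]] /=.
by apply/existsP; exists e; rewrite pe (subsetP sTMN e eT).
Qed.

Lemma fresh_exceeds (D R0 : {set E}) :
    (forall Q, rainbow_matching Q -> #|Q| <= #|M|) ->
    R0 \subset R -> rainbow_matching R0 -> D \subset M -> #|D| < #|R0| ->
    [disjoint conflicts D R0 & M'] ->
  t < #|VM R0 :\: VM D| + #|col @: R0 :\: col @: D|.
Proof.
move=> maxM sR0R rmR0 sDM ltDR0 dM'.
have sTMN := conflicts_in_MN sR0R dM'.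
have sTMN' : conflicts D R0 \subset M_N ends M N by apply: subset_trans sTMN (subsetDl _ _).
apply: leq_trans (card_conflicts_le R0 sDM).
exact: conflicts_exceed maxM rmR0 sDM ltDR0 sTMN' (aux_touching_avoids sR0R sTMN).
Qed.

End AvoidingMatching.
End Augmentation.
End RainbowMatchings.

Theorem lemma2p5 (V E C : finType) (ends : E -> V * V) (col : E -> C)
  (loopless : forall e, (ends e).1 != (ends e).2)
  (M : {set E}) (t : nat) (N : {set V * V}) (M' : {set E}) :
  rainbow_matching ends col M ->
  (forall R : {set E}, rainbow_matching ends col R -> #|R| <= #|M|) ->
  0 < t ->
  aux_matching ends col t M N ->
  M' \subset M ->
  (* |M'| < t/2 - 1 *)
  #|M'|.*2 + 2 < t ->
  ~ (exists R : {set E},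
       [/\ rainbow_matching ends col R,
           coloured_in col R (unused col M :|: C_N ends col M N),
           #|R| = #|M'|.+1 &
           [disjoint VM ends R & avoid_set ends M M' N]]).
Proof.
move=> rmM maxM _ auxN sM'M small [R [rmR colR cardR avoidR]].
have exceeds := fresh_exceeds rmM auxN colR avoidR maxM.
have [/forall_inP meetR | /forall_inPn[r rR unmet]] :=
  boolP [forall r in R, meets ends col M' r].
  have allR : [set r in R | meets ends col M' r] = R.
    by apply/setP => r; rewrite inE andb_idr //; apply: meetR.
  have := exceeds _ _ (subxx R) rmR sM'M (eq_leq (esym cardR))
    (conflicts_disjoint ends col M M' R).
  have := card_fresh_le ends col M' R; rewrite allR cardR; lia.
have sRr : [set r] \subset R by rewrite sub1set.
have lt01 : #|@set0 E| < #|[set r]| by rewrite cards0 cards1.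
have := exceeds _ _ sRr (rainbow_matchingS sRr rmR) (sub0set M) lt01
  (conflicts_disjoint_unmet M set0 unmet).
have := card_fresh_le ends col set0 [set r]; rewrite cards1; lia.
Qed.
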